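(* Let $0<\delta<1/3$, $d_s\ge\delta/2$, $d_x\ge0$. Define $\mathcal D_1=\{0\le d_x\le2\delta,\ d_s\ge d_x/2+\delta/2\}$; $\mathcal D_2=\{2\delta\le d_x\le1/2+\delta/2,\ d_s\ge d_x-\delta/2\}$; $\mathcal D_3=\{d_x\ge d_s+\delta/2,\ \delta/2\le d_s\le1/2\}$; $\mathcal D_4=\{2d_s-\delta\le d_x\le d_s+\delta/2,\ \delta/2\le d_s\le3\delta/2\}$; $\mathcal D_5=\{d_x\ge1/2+\delta/2,\ d_s\ge1/2\}$. Then, with $x,y\in\{0,1,e\}$, $z\in\{0,1\}$: (i) if $(d_s,d_x)\in\mathcal D_1$, $R(d_s,d_x)=h(\delta)+(1-\delta)\log2-h(d_x)-d_x\log2$, attained by $X-Y^\star-Z^\star$ Markov with $P_{Y^\star}(0)=P_{Y^\star}(1)=\frac{1-\delta-d_x}{2-3d_x}$, $P_{Y^\star}(e)=\frac{2\delta-d_x}{2-3d_x}$, $P_{X|Y^\star}(x|y)=1-d_x$ if $x=y$ and $d_x/2$ otherwise, $P_{Z^\star|Y^\star}(z|y)=1$ if $z=y$, $P_{Z^\star|Y^\star}(0|e)=\theta$, $P_{Z^\star|Y^\star}(1|e)=1-\theta$, and $0$ otherwise, for any $\theta\in[0,1]$; (ii) if $(d_s,d_x)\in\mathcal D_2$, $R(d_s,d_x)=(1-\delta)[\log2-h((d_x-\delta)/(1-\delta))]$, attained by $X-Y^\star-Z^\star$ with $P_{Y^\star}(0)=P_{Y^\star}(1)=1/2$, $P_{Y^\star}(e)=0$,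 $P_{X|Y^\star}(x|y)=1-d_x$ if $x=y\ne e$, $d_x-\delta$ if $x\ne y$ with $x,y\ne e$, $\delta$ if $x=e,y\ne e$, and $Z^\star=Y^\star$; (iii) if $(d_s,d_x)\in\mathcal D_3$, $R(d_s,d_x)=(1-\delta)[\log2-h((d_s-\delta/2)/(1-\delta))]$, attained by $X-Z^\star-Y^\star$ with $P_{Z^\star}$ uniform on $\{0,1\}$, $P_{X|Z^\star}(x|z)=1-d_s-\delta/2$ if $x=z$, $d_s-\delta/2$ if $x\ne z,x\ne e$, $\delta$ if $x=e$, and $Y^\star=Z^\star$; (iv) if $(d_s,d_x)\in\mathcal D_4$, $R(d_s,d_x)=h(\delta)+(1-\delta)\log2-H(d_s-\delta/2,\ d_x-d_s+\delta/2,\ 1-d_x)$, attained by $P_{Z^\star Y^\star}(z,y)=\frac{\delta+d_x-1}{\delta+4d_x-2d_s-2}$ if $z=y$, $\frac{d_x-d_s-\delta/2}{\delta+4d_x-2d_s-2}$ if $y=e$, $0$ otherwise, together with $P_{X|Z^\star Y^\star}(x|z,y)=1-d_x$ for $(x|z,y)\in\{(0|0,0),(1|1,1),(e|0,e),(e|1,e)\}$; $d_s-\delta/2$ for $(x|z,y)\in\{(1|0,0),(0|1,1),(1|0,e),(0|1,e)\}$; $d_x-d_s+\delta/2$ for $(x|z,y)\in\{(e|0,0),(e|1,1),(0|0,e),(1|1,e)\}$; $0$ otherwise; (v) if $(d_s,d_x)\in\mathcal D_5$, $R(d_s,d_x)=0$. Here ''attained by'' means the displayed joint distribution of $(X,Z^\star,Y^\star)$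 has $X$-marginal $P_X$ and its conditional $P_{Z^\star Y^\star|X}$ is a minimizer in the definition of $R(d_s,d_x)$.
   Context: Erased fair coin flips: $S$ is uniform on $\{0,1\}$, and $X\in\{0,1,e\}$ is the output of a binary erasure channel with erasure probability $\delta$ and input $S$ (so $X=S$ w.p. $1-\delta$, $X=e$ w.p. $\delta$). Reconstructions $Z\in\{0,1\}$ for $S$ and $Y\in\{0,1,e\}$ for $X$, with Hamming distortions $\mathsf d_s(s,z)=1\{s\ne z\}$, $\mathsf d_x(x,y)=1\{x\ne y\}$. Let $\bar{\mathsf d}_s(x,z)=\mathbb E[\mathsf d_s(S,z)\mid X=x]$. $R(d_s,d_x)=\min_{P_{ZY|X}}I(X;Z,Y)$ subject to $\mathbb E[\bar{\mathsf d}_s(X,Z)]\le d_s$ and $\mathbb E[\mathsf d_x(X,Y)]\le d_x$. $h(p)=-p\log p-(1-p)\log(1-p)$ is the binary entropy and $H(p_1,p_2,p_3)=-\sum_ip_i\log p_i$, with $0\log0=0$ and the same logarithm base as in the mutual information. *)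

From Stdlib Require Import Reals Lra.
Open Scope R_scope.

(* Alphabets: sym = {0,1,e} (for X and Y), bit = {0,1} (for S and Z). *)
Inductive sym : Type := s0 | s1 | se.
Inductive bit : Type := b0 | b1.

Definition sym_eqb (x y : sym) : bool :=
  match x, y with s0, s0 | s1, s1 | se, se => true | _, _ => false end.
Definition bit_eqb (a c : bit) : bool :=
  match a, c with b0, b0 | b1, b1 => true | _, _ => false end.
Definition zy_eq (z : bit) (y : sym) : bool :=
  match z, y with b0, s0 | b1, s1 => true | _, _ => false end.

Definition sumS (f : sym -> R) : R := f s0 + f s1 + f se.
Definition sumB (f : bit -> R) : R := f b0 + f b1.

Definition logb (b x : R) : R := ln x / ln b.

Definition xlogx (b p : R) : R := if Req_EM_T p 0 then 0 else p * logb b p.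
Definition h (b p : R) : R := - xlogx b p - xlogx b (1 - p).
Definition H3 (b p1 p2 p3 : R) : R := - (xlogx b p1 + xlogx b p2 + xlogx b p3).

(* Source: S uniform on {0,1}, X = BEC(delta) output. Joint P_{SX}. *)
Definition PSX (delta : R) (s : bit) (x : sym) : R :=
  / 2 * (match x with
         | se => delta
         | _ => if zy_eq s x then 1 - delta else 0
         end).
Definition PX (delta : R) (x : sym) : R := sumB (fun s => PSX delta s x).

Definition dist_s (s z : bit) : R := if bit_eqb s z then 0 else 1.
Definition dist_x (x y : sym) : R := if sym_eqb x y then 0 else 1.
Definition dbar_s (delta : R) (x : sym) (z : bit) : R :=
  sumB (fun s => PSX delta s x * dist_s s z) / PX delta x.

(* A test channel P_{ZY|X}: W x z y = P(Z=z, Y=y | X=x). *)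
Definition kernel := sym -> bit -> sym -> R.

Definition valid_kernel (W : kernel) : Prop :=
  (forall x z y, 0 <= W x z y) /\
  (forall x, sumB (fun z => sumS (fun y => W x z y)) = 1).

Definition Edist_s (delta : R) (W : kernel) : R :=
  sumS (fun x => sumB (fun z => sumS (fun y =>
    PX delta x * W x z y * dbar_s delta x z))).
Definition Edist_x (delta : R) (W : kernel) : R :=
  sumS (fun x => sumB (fun z => sumS (fun y =>
    PX delta x * W x z y * dist_x x y))).

Definition feasible (delta ds dx : R) (W : kernel) : Prop :=
  valid_kernel W /\ Edist_s delta W <= ds /\ Edist_x delta W <= dx.

Definition plogq (b p q : R) : R := if Req_EM_T p 0 then 0 else p * logb b (p / q).

Definition Qout (delta : R) (W : kernel) (z : bit) (y : sym) : R :=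
  sumS (fun x => PX delta x * W x z y).

Definition MI (b delta : R) (W : kernel) : R :=
  sumS (fun x => sumB (fun z => sumS (fun y =>
    plogq b (PX delta x * W x z y) (PX delta x * Qout delta W z y)))).

Definition minimizer (b delta ds dx : R) (W : kernel) : Prop :=
  feasible delta ds dx W /\
  forall W', feasible delta ds dx W' -> MI b delta W <= MI b delta W'.

(* a joint distribution J x z y = P(X=x, Z*=z, Y*=y) *)
Definition joint := sym -> bit -> sym -> R.
Definition cond_of (delta : R) (J : joint) : kernel :=
  fun x z y => J x z y / PX delta x.

Definition attains (b delta ds dx : R) (J : joint) (r : R) : Prop :=
  (forall x, sumB (fun z => sumS (fun y => J x z y)) = PX delta x) /\
  minimizer b delta ds dx (cond_of delta J) /\
  MI b delta (cond_of delta J) = r.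

Definition D1 (delta ds dx : R) : Prop := 0 <= dx <= 2 * delta /\ ds >= dx / 2 + delta / 2.
Definition D2 (delta ds dx : R) : Prop := 2 * delta <= dx <= / 2 + delta / 2 /\ ds >= dx - delta / 2.
Definition D3 (delta ds dx : R) : Prop := dx >= ds + delta / 2 /\ delta / 2 <= ds <= / 2.
Definition D4 (delta ds dx : R) : Prop :=
  2 * ds - delta <= dx <= ds + delta / 2 /\ delta / 2 <= ds <= 3 * delta / 2.
Definition D5 (delta ds dx : R) : Prop := dx >= / 2 + delta / 2 /\ ds >= / 2.

Definition PY1 (delta dx : R) (y : sym) : R :=
  match y with
  | se => (2 * delta - dx) / (2 - 3 * dx)
  | _ => (1 - delta - dx) / (2 - 3 * dx)
  end.
Definition PXgY1 (dx : R) (x y : sym) : R := if sym_eqb x y then 1 - dx else dx / 2.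
Definition PZgY1 (theta : R) (z : bit) (y : sym) : R :=
  match y with
  | se => match z with b0 => theta | b1 => 1 - theta end
  | _ => if zy_eq z y then 1 else 0
  end.
Definition J1 (delta dx theta : R) : joint :=
  fun x z y => PY1 delta dx y * PXgY1 dx x y * PZgY1 theta z y.

Definition PY2 (y : sym) : R := match y with se => 0 | _ => / 2 end.
Definition PXgY2 (delta dx : R) (x y : sym) : R :=
  match y with
  | se => 0 (* irrelevant: P_{Y*}(e) = 0 *)
  | _ => if sym_eqb x y then 1 - dx
         else match x with se => delta | _ => dx - delta end
  end.
Definition J2 (delta dx : R) : joint :=
  fun x z y => PY2 y * PXgY2 delta dx x y * (if zy_eq z y then 1 else 0).

Definition PXgZ3 (delta ds : R) (x : sym) (z : bit) : R :=
  match x with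
  | se => delta
  | _ => if zy_eq z x then 1 - ds - delta / 2 else ds - delta / 2
  end.
Definition J3 (delta ds : R) : joint :=
  fun x z y => / 2 * PXgZ3 delta ds x z * (if zy_eq z y then 1 else 0).

Definition PZY4 (delta ds dx : R) (z : bit) (y : sym) : R :=
  if zy_eq z y then (delta + dx - 1) / (delta + 4 * dx - 2 * ds - 2)
  else match y with
       | se => (dx - ds - delta / 2) / (delta + 4 * dx - 2 * ds - 2)
       | _ => 0
       end.
Definition PXgZY4 (delta ds dx : R) (x : sym) (z : bit) (y : sym) : R :=
  match x, z, y with
  | s0, b0, s0 | s1, b1, s1 | se, b0, se | se, b1, se => 1 - dx
  | s1, b0, s0 | s0, b1, s1 | s1, b0, se | s0, b1, se => ds - delta / 2
  | se, b0, s0 | se, b1, s1 | s0, b0, se | s1, b1, se => dx - ds + delta / 2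
  | _, _, _ => 0
  end.
Definition J4 (delta ds dx : R) : joint :=
  fun x z y => PZY4 delta ds dx z y * PXgZY4 delta ds dx x z y.

From Stdlib Require Import Reals Lra.
Open Scope R_scope.

(* For every nonnegative K with sum_x P_X(x) K(x,z,y) <= 1 for all (z,y), the inequality
   ln t <= t - 1 at t = Q(z,y) K(x,z,y) / W(z,y|x) gives I(X;Z,Y) >= E[ln K(X,Z,Y)] in nats,
   with equality when W(z,y|x) = Q(z,y) K(x,z,y).  For the tilted kernel
   K(x,z,y) = lambda(x) a^[x <> e, z <> x] c^[y <> x] with a, c <= 1 (lambda = L on {0,1}
   and m on e), E[ln K] is affine in the two expected distortions with nonpositive slopes
   ln a and ln c, so every feasible kernel has
   I >= (1 - delta) ln L + delta ln m + ln a (ds - delta/2) + ln c dx.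
   In each region the displayed joint distribution has a conditional of the equality form
   for suitable L, m, a, c and meets each distortion constraint with equality unless its
   slope vanishes, so it attains this bound, whose value is the stated closed form. *)

Lemma ln_0 : ln 0 = 0.
Proof. unfold ln; case (Rlt_dec 0 0); intros H; [exfalso; lra | reflexivity]. Qed.

Lemma ln_le_sub1 x : 0 < x -> ln x <= x - 1.
Proof. intros Hx; pose proof (exp_ineq1_le (ln x)) as H; rewrite exp_ln in H; lra. Qed.

Lemma ln_div x y : 0 < x -> 0 < y -> ln (x / y) = ln x - ln y.
Proof.
  intros Hx Hy; unfold Rdiv.
  rewrite ln_mult, ln_Rinv; [ring | lra | lra | apply Rinv_0_lt_compat; lra].
Qed.

Lemma ln_gt_0 x : 1 < x -> 0 < ln x.
Proof. intros Hx; rewrite <- ln_1; apply ln_increasing; lra. Qed.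

Lemma ln_le_0 x : 0 <= x <= 1 -> ln x <= 0.
Proof.
  intros Hx; destruct (Req_dec x 0) as [-> | Hx0]; [rewrite ln_0; lra |].
  destruct (Req_dec x 1) as [-> | Hx1]; [rewrite ln_1; lra |].
  rewrite <- ln_1; left; apply ln_increasing; lra.
Qed.

Lemma Rdiv_nonneg p q : 0 <= p -> 0 < q -> 0 <= p / q.
Proof. intros Hp Hq; apply Rmult_le_pos; [lra | left; apply Rinv_0_lt_compat; lra]. Qed.

Lemma Rdiv_nonneg_neg p q : p <= 0 -> q < 0 -> 0 <= p / q.
Proof.
  intros Hp Hq; replace (p / q) with (- p / - q) by (field; lra); apply Rdiv_nonneg; lra.
Qed.

Lemma Rdiv_unit p q : 0 <= p -> p <= q -> 0 < q -> 0 <= p / q <= 1.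
Proof.
  intros Hp Hpq Hq; split; [apply Rdiv_nonneg; lra |].
  apply (Rmult_le_reg_r q); [lra |]; unfold Rdiv; rewrite Rmult_assoc, Rinv_l; lra.
Qed.

Lemma Rdiv_eq_0_num p q : 0 < q -> p / q = 0 -> p = 0.
Proof.
  intros Hq E; unfold Rdiv in E; apply Rmult_integral in E; destruct E as [E | E]; [exact E |].
  exfalso; apply (Rinv_neq_0_compat q); lra.
Qed.

Definition xlnx (p : R) : R := if Req_EM_T p 0 then 0 else p * ln p.

Lemma xlogx_xlnx b p : xlogx b p = xlnx p / ln b.
Proof. unfold xlogx, xlnx, logb; destruct (Req_EM_T p 0); unfold Rdiv; ring. Qed.

Lemma xlnx_pos p : 0 < p -> xlnx p = p * ln p.
Proof. intros Hp; unfold xlnx; destruct (Req_EM_T p 0); lra. Qed.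

Lemma xlnx_0 : xlnx 0 = 0.
Proof. unfold xlnx; destruct (Req_EM_T 0 0); lra. Qed.

Lemma ln_div_mul x y : 0 <= x -> 0 < y -> ln (x / y) * x = xlnx x - x * ln y.
Proof.
  intros Hx Hy; unfold xlnx; destruct (Req_EM_T x 0) as [-> | Hx0]; [ring |].
  rewrite ln_div by lra; ring.
Qed.

Lemma xlnx_div x y : 0 <= x -> 0 < y -> xlnx (x / y) = (xlnx x - x * ln y) / y.
Proof.
  intros Hx Hy; rewrite <- ln_div_mul by lra.
  destruct (Req_dec x 0) as [-> | Hx0].
  - rewrite Rdiv_0_l, xlnx_0; field; lra.
  - rewrite xlnx_pos; [field; lra | apply Rdiv_lt_0_compat; lra].
Qed.

Definition z_mismatch (x : sym) (z : bit) : bool :=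
  match x, z with s0, b1 | s1, b0 => true | _, _ => false end.

Lemma PX_s0 d : PX d s0 = (1 - d) / 2.
Proof. unfold PX, sumB, PSX; simpl; field. Qed.

Lemma PX_s1 d : PX d s1 = (1 - d) / 2.
Proof. unfold PX, sumB, PSX; simpl; field. Qed.

Lemma PX_se d : PX d se = d.
Proof. unfold PX, sumB, PSX; simpl; field. Qed.

Lemma PX_pos d x : 0 < d < 1 -> 0 < PX d x.
Proof. intros Hd; destruct x; rewrite ?PX_s0, ?PX_s1, ?PX_se; lra. Qed.

Lemma dbar_s_val d x z : 0 < d < 1 ->
  dbar_s d x z = match x with se => / 2 | _ => if z_mismatch x z then 1 else 0 end.
Proof.
  intros Hd; destruct x, z; unfold dbar_s, sumB, dist_s;
    rewrite ?PX_s0, ?PX_s1, ?PX_se; unfold PSX; simpl; field; lra.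
Qed.

Definition sum3 (f : sym -> bit -> sym -> R) : R :=
  sumS (fun x => sumB (fun z => sumS (fun y => f x z y))).
Definition sum2 (g : bit -> sym -> R) : R := sumB (fun z => sumS (fun y => g z y)).

Lemma sum3_le f g : (forall x z y, f x z y <= g x z y) -> sum3 f <= sum3 g.
Proof. intros H; unfold sum3, sumS, sumB; repeat apply Rplus_le_compat; apply H. Qed.

Lemma sum2_le f g : (forall z y, f z y <= g z y) -> sum2 f <= sum2 g.
Proof. intros H; unfold sum2, sumS, sumB; repeat apply Rplus_le_compat; apply H. Qed.

Lemma sumS_ge_term f x : (forall x, 0 <= f x) -> f x <= sumS f.
Proof.
  intros H; unfold sumS; pose proof (H s0); pose proof (H s1); pose proof (H se).
  destruct x; lra.
Qed.

Lemma sum3_ge_term f x z y : (forall x z y, 0 <= f x z y) -> f x z y <= sum3 f.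
Proof.
  intros H; unfold sum3, sumS, sumB.
  generalize (H s0 b0 s0) (H s0 b0 s1) (H s0 b0 se) (H s0 b1 s0) (H s0 b1 s1) (H s0 b1 se)
    (H s1 b0 s0) (H s1 b0 s1) (H s1 b0 se) (H s1 b1 s0) (H s1 b1 s1) (H s1 b1 se)
    (H se b0 s0) (H se b0 s1) (H se b0 se) (H se b1 s0) (H se b1 s1) (H se b1 se).
  destruct x, z, y; lra.
Qed.

Lemma sum3_by_columns (Q : bit -> sym -> R) (F : sym -> bit -> sym -> R) :
  sum3 (fun x z y => Q z y * F x z y) = sum2 (fun z y => Q z y * sumS (fun x => F x z y)).
Proof. unfold sum3, sum2, sumS, sumB; ring. Qed.

Lemma valid_kernel_last W x : valid_kernel W ->
  W x b1 se = 1 - (W x b0 s0 + W x b0 s1 + W x b0 se + W x b1 s0 + W x b1 s1).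
Proof. intros [_ HW]; specialize (HW x); unfold sumB, sumS in HW; lra. Qed.

Lemma Qout_ge d W x z y : 0 < d < 1 -> valid_kernel W -> PX d x * W x z y <= Qout d W z y.
Proof.
  intros Hd [Hn _]; apply (sumS_ge_term (fun x => PX d x * W x z y)); intros x'.
  apply Rmult_le_pos; [left; apply PX_pos; lra | apply Hn].
Qed.

Lemma Qout_nonneg d W z y : 0 < d < 1 -> valid_kernel W -> 0 <= Qout d W z y.
Proof.
  intros Hd HW; apply (Rle_trans _ (PX d s0 * W s0 z y)); [| apply Qout_ge; auto].
  apply Rmult_le_pos; [left; apply PX_pos; lra | apply HW].
Qed.

Lemma sum3_PX_W d W : valid_kernel W -> sum3 (fun x z y => PX d x * W x z y) = 1.
Proof.
  intros HW; unfold sum3, sumS, sumB.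
  rewrite PX_s0, PX_s1, PX_se, !(valid_kernel_last W) by auto; field.
Qed.

Lemma Qout_total d W : valid_kernel W -> sum2 (Qout d W) = 1.
Proof.
  intros HW; rewrite <- (sum3_PX_W d W HW); unfold sum2, Qout, sum3, sumS, sumB; ring.
Qed.

Lemma Edist_s_mismatch d W : 0 < d < 1 -> valid_kernel W ->
  Edist_s d W =
  d / 2 + (1 - d) / 2 * sum3 (fun x z y => if z_mismatch x z then W x z y else 0).
Proof.
  intros Hd HW; unfold Edist_s, sum3, sumS, sumB; rewrite !dbar_s_val by lra.
  rewrite PX_s0, PX_s1, PX_se; simpl; rewrite !(valid_kernel_last W) by auto; field.
Qed.

Lemma feasible_no_s_error d ds dx W x z y : 0 < d < 1 -> feasible d ds dx W ->
  ds <= d / 2 -> z_mismatch x z = true -> W x z y = 0.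
Proof.
  intros Hd [HW [Hs _]] Hds Hxz.
  set (f := fun x z y => if z_mismatch x z then W x z y else 0).
  assert (Hf : forall x z y, 0 <= f x z y).
  { intros x' z' y'; unfold f; destruct (z_mismatch x' z'); [apply HW | lra]. }
  assert (Hsum : sum3 f <= 0).
  { rewrite Edist_s_mismatch in Hs by auto.
    apply (Rmult_le_reg_l ((1 - d) / 2)); [lra |]; fold f in Hs; lra. }
  assert (Hfxzy : f x z y = W x z y) by (unfold f; rewrite Hxz; reflexivity).
  pose proof (sum3_ge_term f x z y Hf); pose proof (proj1 HW x z y); lra.
Qed.

Lemma feasible_no_x_error d ds dx W x z y : 0 < d < 1 -> feasible d ds dx W ->
  dx <= 0 -> sym_eqb x y = false -> W x z y = 0.
Proof.
  intros Hd [HW [_ Hx]] Hdx Hxy.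
  set (f := fun x z y => PX d x * W x z y * dist_x x y).
  assert (Hf : forall x z y, 0 <= f x z y).
  { intros x' z' y'; unfold f, dist_x.
    pose proof (PX_pos d x' Hd); pose proof (proj1 HW x' z' y').
    destruct (sym_eqb x' y'); [lra | rewrite Rmult_1_r; apply Rmult_le_pos; lra]. }
  assert (Hfxzy : f x z y = PX d x * W x z y)
    by (unfold f, dist_x; rewrite Hxy; ring).
  pose proof (sum3_ge_term f x z y Hf); change (sum3 f) with (Edist_x d W) in *.
  apply Rle_antisym; [| apply HW]; apply Rnot_lt_le; intros Hpos.
  pose proof (Rmult_lt_0_compat _ _ (PX_pos d x Hd) Hpos); lra.
Qed.

Definition expected_log (d : R) (W G : kernel) : R :=
  sum3 (fun x z y => PX d x * W x z y * G x z y).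

Lemma plogq_ge b w q K G : 1 < b -> 0 <= w -> 0 <= q * K ->
  (0 < w -> 0 < q /\ 0 < K /\ G = ln K) -> w * G + w - q * K <= plogq b w q * ln b.
Proof.
  intros Hb Hw HqK Hsupp; pose proof (ln_gt_0 b Hb); unfold plogq, logb.
  destruct (Req_EM_T w 0) as [-> | Hw0]; [lra |].
  assert (Hwpos : 0 < w) by lra; destruct (Hsupp Hwpos) as (Hq & HK & ->).
  replace (w * (ln (w / q) / ln b) * ln b) with (w * ln (w / q)) by (field; lra).
  assert (HqKpos : 0 < q * K) by (apply Rmult_lt_0_compat; lra).
  assert (Hratio : 0 < q * K / w) by (apply Rdiv_lt_0_compat; lra).
  pose proof (ln_le_sub1 _ Hratio) as Hln; rewrite ln_div, ln_mult in Hln by lra.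
  rewrite ln_div by lra.
  assert (Hw_ln : w * (ln q + ln K - ln w) <= w * (q * K / w - 1))
    by (apply Rmult_le_compat_l; lra).
  replace (w * (q * K / w - 1)) with (q * K - w) in Hw_ln by (field; lra); lra.
Qed.

Lemma plogq_eq b w q K G : 1 < b -> 0 <= w ->
  (0 < w -> 0 < q /\ 0 < K /\ G = ln K /\ w = q * K) -> plogq b w q * ln b = w * G.
Proof.
  intros Hb Hw Hsupp; pose proof (ln_gt_0 b Hb); unfold plogq, logb.
  destruct (Req_EM_T w 0) as [-> | Hw0]; [ring |].
  assert (Hwpos : 0 < w) by lra; destruct (Hsupp Hwpos) as (Hq & HK & -> & Hwq).
  replace (w / q) with K by (rewrite Hwq; field; lra); field; lra.
Qed.

Lemma Rmult_pos_factors u v : 0 <= u -> 0 <= v -> 0 < u * v -> 0 < u /\ 0 < v.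
Proof.
  intros Hu Hv Huv; split; apply Rnot_le_lt; intros H.
  - replace u with 0 in Huv by lra; lra.
  - replace v with 0 in Huv by lra; lra.
Qed.

Lemma MI_ge_expected_log b d W (K G : kernel) :
  1 < b -> 0 < d < 1 -> valid_kernel W ->
  (forall x z y, 0 <= K x z y) ->
  (forall x z y, 0 < W x z y -> 0 < K x z y /\ G x z y = ln (K x z y)) ->
  (forall z y, sumS (fun x => PX d x * K x z y) <= 1) ->
  expected_log d W G <= MI b d W * ln b.
Proof.
  intros Hb Hd HW HK HG Hcol.
  assert (Hterm : forall x z y,
    PX d x * W x z y * G x z y + PX d x * W x z y - Qout d W z y * (PX d x * K x z y)
    <= plogq b (PX d x * W x z y) (PX d x * Qout d W z y) * ln b).
  { intros x z y; pose proof (PX_pos d x Hd); pose proof (proj1 HW x z y).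
    pose proof (Qout_ge d W x z y Hd HW); pose proof (Qout_nonneg d W z y Hd HW).
    pose proof (HK x z y).
    replace (Qout d W z y * (PX d x * K x z y)) with (PX d x * Qout d W z y * K x z y)
      by ring.
    apply plogq_ge; auto.
    - apply Rmult_le_pos; lra.
    - repeat apply Rmult_le_pos; lra.
    - intros Hw.
      destruct (Rmult_pos_factors (PX d x) (W x z y) ltac:(lra) (proj1 HW x z y) Hw)
        as [_ HWpos].
      destruct (HG x z y HWpos) as [HKpos HGK]; repeat split; auto.
      apply Rmult_lt_0_compat; lra. }
  assert (Hcols : sum3 (fun x z y => Qout d W z y * (PX d x * K x z y)) <= 1).
  { rewrite sum3_by_columns, <- (Qout_total d W HW); apply sum2_le; intros z y.
    rewrite <- (Rmult_1_r (Qout d W z y)) at 2.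
    apply Rmult_le_compat_l; [apply Qout_nonneg; auto | apply Hcol]. }
  pose proof (sum3_le _ _ Hterm) as Hsum; pose proof (sum3_PX_W d W HW).
  unfold MI, expected_log; unfold sum3, sumS, sumB in *; lra.
Qed.

Lemma MI_eq_expected_log b d W (K G : kernel) :
  1 < b -> 0 < d < 1 -> valid_kernel W ->
  (forall x z y, 0 <= K x z y) ->
  (forall x z y, 0 < K x z y -> G x z y = ln (K x z y)) ->
  (forall x z y, W x z y = Qout d W z y * K x z y) ->
  MI b d W * ln b = expected_log d W G.
Proof.
  intros Hb Hd HW HK HG HWK.
  assert (Hterm : forall x z y,
    plogq b (PX d x * W x z y) (PX d x * Qout d W z y) * ln b = PX d x * W x z y * G x z y).
  { intros x z y; pose proof (PX_pos d x Hd); pose proof (proj1 HW x z y).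
    apply (plogq_eq b _ _ (K x z y)); auto; [apply Rmult_le_pos; lra |].
    intros Hw.
    destruct (Rmult_pos_factors (PX d x) (W x z y) ltac:(lra) (proj1 HW x z y) Hw)
      as [_ HWpos].
    rewrite HWK in HWpos.
    destruct (Rmult_pos_factors _ _ (Qout_nonneg d W z y Hd HW) (HK x z y) HWpos)
      as [HQ HKpos].
    repeat split; auto; [apply Rmult_lt_0_compat; lra | rewrite HWK at 1; ring]. }
  unfold MI, expected_log, sum3, sumS, sumB; rewrite !Rmult_plus_distr_r, !Hterm; reflexivity.
Qed.

Definition lambda (L m : R) (x : sym) : R := match x with se => m | _ => L end.

Definition tilted (L m a c : R) : kernel := fun x z y =>
  lambda L m x * (if z_mismatch x z then a else 1) * (if sym_eqb x y then 1 else c).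

(* Agrees with [ln (tilted L m a c)] wherever [tilted] is positive; unlike the
   latter it is affine in the two distortions also when [a = 0] or [c = 0]. *)
Definition tilted_log (L m a c : R) : kernel := fun x z y =>
  ln (lambda L m x) + (if z_mismatch x z then ln a else 0) + (if sym_eqb x y then 0 else ln c).

Definition dual_value (d ds dx L m a c : R) : R :=
  (1 - d) * ln L + d * ln m + ln a * (ds - d / 2) + ln c * dx.

(* The last two conditions bound the column sums of [tilted] for [y <> se] and [y = se]. *)
Definition dual_feasible (d ds dx L m a c : R) : Prop :=
  0 < L /\ 0 < m /\ 0 <= a <= 1 /\ 0 <= c <= 1 /\
  (a = 0 -> ds <= d / 2) /\ (c = 0 -> dx <= 0) /\
  (1 - d) / 2 * L + (1 - d) / 2 * L * a * c + d * m * c <= 1 /\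
  (1 - d) / 2 * L * c + (1 - d) / 2 * L * a * c + d * m <= 1.

Lemma lambda_pos L m x : 0 < L -> 0 < m -> 0 < lambda L m x.
Proof. intros; destruct x; simpl; auto. Qed.

Lemma tilted_nonneg L m a c x z y : 0 < L -> 0 < m -> 0 <= a -> 0 <= c ->
  0 <= tilted L m a c x z y.
Proof.
  intros HL Hm Ha Hc; pose proof (lambda_pos L m x HL Hm); unfold tilted.
  destruct (z_mismatch x z), (sym_eqb x y); repeat apply Rmult_le_pos; lra.
Qed.

Lemma tilted_log_ln L m a c x z y : 0 < L -> 0 < m -> 0 <= a -> 0 <= c ->
  0 < tilted L m a c x z y -> tilted_log L m a c x z y = ln (tilted L m a c x z y).
Proof.
  intros HL Hm Ha Hc Hpos; pose proof (lambda_pos L m x HL Hm) as Hl.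
  unfold tilted, tilted_log in *; set (l := lambda L m x) in *.
  destruct (z_mismatch x z), (sym_eqb x y); rewrite ?Rmult_1_r in *.
  - destruct (Rmult_pos_factors l a) as [_ Ha']; try lra.
    rewrite ln_mult by lra; ring.
  - destruct (Rmult_pos_factors (l * a) c) as [Hla Hc']; try lra.
    { apply Rmult_le_pos; lra. }
    destruct (Rmult_pos_factors l a) as [_ Ha']; try lra.
    rewrite !ln_mult by lra; ring.
  - ring.
  - destruct (Rmult_pos_factors l c) as [_ Hc']; try lra.
    rewrite ln_mult by lra; ring.
Qed.

Lemma tilted_column_le d ds dx L m a c z y : 0 < d < 1 -> dual_feasible d ds dx L m a c ->
  sumS (fun x => PX d x * tilted L m a c x z y) <= 1.
Proof.
  intros Hd (HL & Hm & Ha & Hc & _ & _ & Hcol & Hcole).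
  assert (0 <= (1 - d) / 2 * L * ((1 - a) * (1 - c))) by (repeat apply Rmult_le_pos; lra).
  unfold sumS; rewrite PX_s0, PX_s1, PX_se.
  destruct z, y; unfold tilted; simpl; lra.
Qed.

Lemma expected_tilted_log d W L m a c : 0 < d < 1 -> valid_kernel W ->
  expected_log d W (tilted_log L m a c) = dual_value d (Edist_s d W) (Edist_x d W) L m a c.
Proof.
  intros Hd HW; rewrite Edist_s_mismatch by auto.
  unfold expected_log, dual_value, Edist_x, tilted_log, dist_x, sum3, sumS, sumB.
  rewrite PX_s0, PX_s1, PX_se; simpl; rewrite !(valid_kernel_last W) by auto; field.
Qed.

Lemma tilted_pos_on_support d ds dx W L m a c x z y :
  0 < d < 1 -> feasible d ds dx W -> dual_feasible d ds dx L m a c ->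
  0 < W x z y -> 0 < tilted L m a c x z y.
Proof.
  intros Hd HF (HL & Hm & Ha & Hc & Ha0 & Hc0 & _) HWpos.
  assert (Hapos : z_mismatch x z = true -> 0 < a).
  { intros Hxz; destruct (Req_dec a 0) as [E | E]; [| lra].
    rewrite (feasible_no_s_error d ds dx W x z y Hd HF (Ha0 E) Hxz) in HWpos; lra. }
  assert (Hcpos : sym_eqb x y = false -> 0 < c).
  { intros Hxy; destruct (Req_dec c 0) as [E | E]; [| lra].
    rewrite (feasible_no_x_error d ds dx W x z y Hd HF (Hc0 E) Hxy) in HWpos; lra. }
  pose proof (lambda_pos L m x HL Hm); unfold tilted.
  destruct (z_mismatch x z), (sym_eqb x y); repeat apply Rmult_lt_0_compat; auto; lra.
Qed.

Lemma dual_value_le_MI b d ds dx W L m a c :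
  1 < b -> 0 < d < 1 -> feasible d ds dx W -> dual_feasible d ds dx L m a c ->
  dual_value d ds dx L m a c <= MI b d W * ln b.
Proof.
  intros Hb Hd HF Hdual.
  pose proof Hdual as (HL & Hm & Ha & Hc & _); pose proof HF as (HW & Hs & Hx).
  apply (Rle_trans _ (expected_log d W (tilted_log L m a c))).
  - rewrite expected_tilted_log by auto; unfold dual_value.
    pose proof (ln_le_0 a Ha); pose proof (ln_le_0 c Hc).
    assert (ln a * (ds - d / 2) <= ln a * (Edist_s d W - d / 2))
      by (apply Rmult_le_compat_neg_l; lra).
    assert (ln c * dx <= ln c * Edist_x d W) by (apply Rmult_le_compat_neg_l; lra).
    lra.
  - apply (MI_ge_expected_log b d W (tilted L m a c)); auto.
    + intros x z y; apply tilted_nonneg; lra.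
    + intros x z y HWpos.
      pose proof (tilted_pos_on_support d ds dx W L m a c x z y Hd HF Hdual HWpos).
      split; [auto | apply tilted_log_ln; auto; lra].
    + intros z y; apply (tilted_column_le d ds dx); auto.
Qed.

Lemma cond_of_valid d J : 0 < d < 1 ->
  (forall x, sumB (fun z => sumS (fun y => J x z y)) = PX d x) ->
  (forall x z y, 0 <= J x z y) -> valid_kernel (cond_of d J).
Proof.
  intros Hd HJ Hn; split; intros x; pose proof (PX_pos d x Hd); unfold cond_of.
  - intros z y; apply Rmult_le_pos; [apply Hn | left; apply Rinv_0_lt_compat; lra].
  - specialize (HJ x); unfold sumB, sumS in *.
    transitivity ((J x b0 s0 + J x b0 s1 + J x b0 se + (J x b1 s0 + J x b1 s1 + J x b1 se))
      / PX d x); [field; lra | rewrite HJ; field; lra].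
Qed.

Lemma Qout_cond_of d J z y : 0 < d < 1 -> Qout d (cond_of d J) z y = sumS (fun x => J x z y).
Proof. intros Hd; unfold Qout, cond_of, sumS; rewrite PX_s0, PX_s1, PX_se; field; lra. Qed.

Lemma Edist_s_cond_of d J : 0 < d < 1 ->
  Edist_s d (cond_of d J) =
  J s0 b1 s0 + J s0 b1 s1 + J s0 b1 se + J s1 b0 s0 + J s1 b0 s1 + J s1 b0 se
  + / 2 * (J se b0 s0 + J se b0 s1 + J se b0 se + J se b1 s0 + J se b1 s1 + J se b1 se).
Proof.
  intros Hd; unfold Edist_s, cond_of, sumS, sumB; rewrite !dbar_s_val by lra.
  rewrite PX_s0, PX_s1, PX_se; simpl; field; lra.
Qed.

Lemma Edist_x_cond_of d J : 0 < d < 1 ->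
  Edist_x d (cond_of d J) =
  J s0 b0 s1 + J s0 b0 se + J s0 b1 s1 + J s0 b1 se + J s1 b0 s0 + J s1 b0 se
  + J s1 b1 s0 + J s1 b1 se + J se b0 s0 + J se b0 s1 + J se b1 s0 + J se b1 s1.
Proof.
  intros Hd; unfold Edist_x, cond_of, dist_x, sumS, sumB.
  rewrite PX_s0, PX_s1, PX_se; simpl; field; lra.
Qed.

Lemma attains_of_tilted b d ds dx J L m a c r :
  1 < b -> 0 < d < 1 ->
  (forall x, sumB (fun z => sumS (fun y => J x z y)) = PX d x) ->
  (forall x z y, 0 <= J x z y) ->
  dual_feasible d ds dx L m a c ->
  Edist_s d (cond_of d J) <= ds -> Edist_x d (cond_of d J) <= dx ->
  ln a * (Edist_s d (cond_of d J) - ds) = 0 -> ln c * (Edist_x d (cond_of d J) - dx) = 0 ->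
  (forall x z y, J x z y = PX d x * sumS (fun x' => J x' z y) * tilted L m a c x z y) ->
  r * ln b = dual_value d ds dx L m a c ->
  attains b d ds dx J r.
Proof.
  intros Hb Hd HJ Hn Hdual Hs Hx Hslack_s Hslack_x Hform Hr.
  pose proof Hdual as (HL & Hm & Ha & Hc & _); pose proof (ln_gt_0 b Hb).
  pose proof (cond_of_valid d J Hd HJ Hn) as HW.
  assert (HMI : MI b d (cond_of d J) * ln b = dual_value d ds dx L m a c).
  { rewrite (MI_eq_expected_log b d _ (tilted L m a c) (tilted_log L m a c)); auto.
    - rewrite expected_tilted_log by auto; unfold dual_value; lra.
    - intros x z y; apply tilted_nonneg; lra.
    - intros x z y; apply tilted_log_ln; lra.
    - intros x z y; rewrite Qout_cond_of by auto; unfold cond_of; rewrite Hform at 1.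
      pose proof (PX_pos d x Hd); field; lra. }
  assert (Hval : MI b d (cond_of d J) = r) by (apply (Rmult_eq_reg_r (ln b)); lra).
  split; [exact HJ |]; split; [| exact Hval].
  split; [split; auto |].
  intros W' HF'; apply (Rmult_le_reg_r (ln b)); [lra |].
  rewrite HMI; apply (dual_value_le_MI b d ds dx); auto.
Qed.

Lemma attains_D1 b d ds dx th : 1 < b -> 0 < d < / 3 -> D1 d ds dx -> 0 <= th <= 1 ->
  attains b d ds dx (J1 d dx th) (h b d + (1 - d) * logb b 2 - h b dx - dx * logb b 2).
Proof.
  intros Hb Hd [[Hx0 Hx1] Hs] Ht; pose proof (ln_gt_0 b Hb).
  assert (Es : Edist_s d (cond_of d (J1 d dx th)) = dx / 2 + d / 2)
    by (rewrite Edist_s_cond_of by lra; unfold J1, PXgY1; simpl; field; lra).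
  assert (Ex : Edist_x d (cond_of d (J1 d dx th)) = dx)
    by (rewrite Edist_x_cond_of by lra; unfold J1, PXgY1; simpl; field; lra).
  apply (attains_of_tilted b d ds dx _
           (2 * (1 - dx) / (1 - d)) ((1 - dx) / d) 1 (dx / (2 * (1 - dx)))); try lra.
  - intros x; destruct x; unfold J1, PXgY1, sumB, sumS;
      rewrite ?PX_s0, ?PX_s1, ?PX_se; simpl; field; lra.
  - assert (0 < / (2 - 3 * dx)) by (apply Rinv_0_lt_compat; lra).
    intros x z y; destruct x, z, y; unfold J1, PY1, PXgY1, PZgY1; simpl;
      repeat apply Rmult_le_pos; lra.
  - repeat split; try apply Rdiv_lt_0_compat; try apply Rdiv_unit; try lra.
    + intros E; apply Rdiv_eq_0_num in E; lra.
    + apply Req_le; field; lra.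
    + apply Req_le; field; lra.
  - rewrite ln_1; ring.
  - rewrite Ex; ring.
  - intros x z y; destruct x, z, y; unfold J1, PXgY1, tilted, lambda, sumS;
      rewrite ?PX_s0, ?PX_s1, ?PX_se; simpl; field; lra.
  - unfold dual_value, h, logb; rewrite !xlogx_xlnx, ln_1, ln_div_mul by lra.
    rewrite ln_mult, (ln_div (2 * (1 - dx))), ln_mult, ln_div by lra.
    rewrite (xlnx_pos d), (xlnx_pos (1 - d)), (xlnx_pos (1 - dx)) by lra.
    field; lra.
Qed.

Lemma attains_D2 b d ds dx : 1 < b -> 0 < d < / 3 -> D2 d ds dx ->
  attains b d ds dx (J2 d dx) ((1 - d) * (logb b 2 - h b ((dx - d) / (1 - d)))).
Proof.
  intros Hb Hd [[Hx0 Hx1] Hs]; pose proof (ln_gt_0 b Hb).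
  assert (Es : Edist_s d (cond_of d (J2 d dx)) = dx - d / 2)
    by (rewrite Edist_s_cond_of by lra; unfold J2, PXgY2; simpl; field).
  assert (Ex : Edist_x d (cond_of d (J2 d dx)) = dx)
    by (rewrite Edist_x_cond_of by lra; unfold J2, PXgY2; simpl; field).
  apply (attains_of_tilted b d ds dx _
           (2 * (1 - dx) / (1 - d)) ((1 - dx) / (dx - d)) 1 ((dx - d) / (1 - dx))); try lra.
  - intros x; destruct x; unfold J2, PXgY2, sumB, sumS;
      rewrite ?PX_s0, ?PX_s1, ?PX_se; simpl; field; lra.
  - intros x z y; destruct x, z, y; unfold J2, PXgY2; simpl; lra.
  - repeat split; try apply Rdiv_lt_0_compat; try apply Rdiv_unit; try lra.
    + intros E; apply Rdiv_eq_0_num in E; lra.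
    + apply Req_le; field; lra.
    + assert (Hslack : 0 <= (dx - 2 * d) * (1 + d - 2 * dx) / (dx - d))
        by (apply Rdiv_nonneg; [apply Rmult_le_pos |]; lra).
      enough (E : (1 - d) / 2 * (2 * (1 - dx) / (1 - d)) * ((dx - d) / (1 - dx))
        + (1 - d) / 2 * (2 * (1 - dx) / (1 - d)) * 1 * ((dx - d) / (1 - dx))
        + d * ((1 - dx) / (dx - d))
        = 1 - (dx - 2 * d) * (1 + d - 2 * dx) / (dx - d)) by lra.
      field; lra.
  - rewrite ln_1; ring.
  - rewrite Ex; ring.
  - intros x z y; destruct x, z, y; unfold J2, PXgY2, tilted, lambda, sumS;
      rewrite ?PX_s0, ?PX_s1, ?PX_se; simpl; field; lra.
  - unfold dual_value, h, logb; rewrite !xlogx_xlnx, ln_1.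
    replace (1 - (dx - d) / (1 - d)) with ((1 - dx) / (1 - d)) by (field; lra).
    rewrite (ln_div (dx - d)), (ln_div (2 * (1 - dx))), ln_mult, ln_div by lra.
    rewrite !xlnx_div, !xlnx_pos by lra.
    field; lra.
Qed.

Lemma attains_D3 b d ds dx : 1 < b -> 0 < d < / 3 -> D3 d ds dx ->
  attains b d ds dx (J3 d ds) ((1 - d) * (logb b 2 - h b ((ds - d / 2) / (1 - d)))).
Proof.
  intros Hb Hd [Hx [Hs0 Hs1]]; pose proof (ln_gt_0 b Hb).
  assert (Es : Edist_s d (cond_of d (J3 d ds)) = ds)
    by (rewrite Edist_s_cond_of by lra; unfold J3, PXgZ3; simpl; field).
  assert (Ex : Edist_x d (cond_of d (J3 d ds)) = ds + d / 2)
    by (rewrite Edist_x_cond_of by lra; unfold J3, PXgZ3; simpl; field).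
  apply (attains_of_tilted b d ds dx _
           (2 * (1 - ds - d / 2) / (1 - d)) 1 ((ds - d / 2) / (1 - ds - d / 2)) 1); try lra.
  - intros x; destruct x; unfold J3, PXgZ3, sumB, sumS;
      rewrite ?PX_s0, ?PX_s1, ?PX_se; simpl; field; lra.
  - intros x z y; destruct x, z, y; unfold J3, PXgZ3; simpl; lra.
  - repeat split; try apply Rdiv_lt_0_compat; try apply Rdiv_unit; try lra.
    + intros E; apply Rdiv_eq_0_num in E; lra.
    + apply Req_le; field; lra.
    + apply Req_le; field; lra.
  - rewrite Es; ring.
  - rewrite ln_1; ring.
  - intros x z y; destruct x, z, y; unfold J3, PXgZ3, tilted, lambda, sumS;
      rewrite ?PX_s0, ?PX_s1, ?PX_se; simpl; field; lra.
  - unfold dual_value, h, logb; rewrite !xlogx_xlnx, ln_1, ln_div_mul by lra.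
    replace (1 - (ds - d / 2) / (1 - d)) with ((1 - ds - d / 2) / (1 - d)) by (field; lra).
    rewrite (ln_div (2 * (1 - ds - d / 2))), ln_mult by lra.
    rewrite !xlnx_div, (xlnx_pos (1 - ds - d / 2)) by lra.
    field; lra.
Qed.

Lemma J4_marginal d ds dx : 0 < d < 1 -> d + 4 * dx - 2 * ds - 2 <> 0 ->
  forall x, sumB (fun z => sumS (fun y => J4 d ds dx x z y)) = PX d x.
Proof.
  intros Hd Hden x; destruct x; unfold J4, PZY4, PXgZY4, sumB, sumS;
    rewrite ?PX_s0, ?PX_s1, ?PX_se; simpl; field; lra.
Qed.

Lemma J4_nonneg d ds dx : 0 < d < / 3 -> D4 d ds dx -> forall x z y, 0 <= J4 d ds dx x z y.
Proof.
  intros Hd [[Hx0 Hx1] [Hs0 Hs1]].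
  assert (0 <= (d + dx - 1) / (d + 4 * dx - 2 * ds - 2)) by (apply Rdiv_nonneg_neg; lra).
  assert (0 <= (dx - ds - d / 2) / (d + 4 * dx - 2 * ds - 2)) by (apply Rdiv_nonneg_neg; lra).
  intros x z y; destruct x, z, y; unfold J4, PZY4, PXgZY4; simpl;
    first [apply Rmult_le_pos | idtac]; lra.
Qed.

Lemma Edist_s_J4 d ds dx : 0 < d < 1 -> d + 4 * dx - 2 * ds - 2 <> 0 ->
  Edist_s d (cond_of d (J4 d ds dx)) = ds.
Proof.
  intros Hd Hden; rewrite Edist_s_cond_of by lra; unfold J4, PZY4, PXgZY4; simpl; field; lra.
Qed.

Lemma Edist_x_J4 d ds dx : 0 < d < 1 -> d + 4 * dx - 2 * ds - 2 <> 0 ->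
  Edist_x d (cond_of d (J4 d ds dx)) = dx.
Proof.
  intros Hd Hden; rewrite Edist_x_cond_of by lra; unfold J4, PZY4, PXgZY4; simpl; field; lra.
Qed.

(* At the corner [ds = d / 2], [dx = 0] of [D4] the parameters below degenerate to
   [a = c = 0], so it is treated separately. *)
Lemma attains_D4_corner b d : 1 < b -> 0 < d < / 3 ->
  attains b d (d / 2) 0 (J4 d (d / 2) 0)
    (h b d + (1 - d) * logb b 2 - H3 b 0 0 1).
Proof.
  intros Hb Hd; pose proof (ln_gt_0 b Hb).
  assert (HD4 : D4 d (d / 2) 0) by (unfold D4; lra).
  apply (attains_of_tilted b d (d / 2) 0 _ (2 / (1 - d)) (1 / d) 0 0); try lra.
  - apply J4_marginal; lra.
  - apply J4_nonneg; auto.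
  - repeat split; try apply Rdiv_lt_0_compat; try lra.
    + apply Req_le; field; lra.
    + apply Req_le; field; lra.
  - rewrite Edist_s_J4 by lra; lra.
  - rewrite Edist_x_J4 by lra; lra.
  - rewrite ln_0; ring.
  - rewrite ln_0; ring.
  - intros x z y; destruct x, z, y; unfold J4, PZY4, PXgZY4, tilted, lambda, sumS;
      rewrite ?PX_s0, ?PX_s1, ?PX_se; simpl; field; lra.
  - unfold dual_value, h, H3, logb; rewrite !xlogx_xlnx, ln_0, !ln_div, ln_1 by lra.
    rewrite (xlnx_pos d), (xlnx_pos (1 - d)), (xlnx_pos 1), xlnx_0, ln_1 by lra.
    field; lra.
Qed.

Lemma attains_D4 b d ds dx : 1 < b -> 0 < d < / 3 -> D4 d ds dx ->
  attains b d ds dx (J4 d ds dx)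
    (h b d + (1 - d) * logb b 2 - H3 b (ds - d / 2) (dx - ds + d / 2) (1 - dx)).
Proof.
  intros Hb Hd HD4; pose proof HD4 as [[Hx0 Hx1] [Hs0 Hs1]]; pose proof (ln_gt_0 b Hb).
  destruct (Req_dec (dx - ds + d / 2) 0) as [Hcorner | Hgap].
  { replace ds with (d / 2) by lra; replace dx with 0 by lra.
    replace (d / 2 - d / 2) with 0 by ring; replace (0 - d / 2 + d / 2) with 0 by ring.
    rewrite Rminus_0_r; apply attains_D4_corner; lra. }
  assert (Hden : d + 4 * dx - 2 * ds - 2 <> 0) by lra.
  apply (attains_of_tilted b d ds dx _ (2 * (1 - dx) / (1 - d)) ((1 - dx) / d)
           ((ds - d / 2) / (dx - ds + d / 2)) ((dx - ds + d / 2) / (1 - dx))); try lra.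
  - apply J4_marginal; lra.
  - apply J4_nonneg; auto.
  - repeat split; try apply Rdiv_lt_0_compat; try apply Rdiv_unit; try lra.
    + intros E; apply Rdiv_eq_0_num in E; lra.
    + intros E; apply Rdiv_eq_0_num in E; lra.
    + apply Req_le; field; lra.
    + apply Req_le; field; lra.
  - rewrite Edist_s_J4 by lra; lra.
  - rewrite Edist_x_J4 by lra; lra.
  - rewrite Edist_s_J4 by lra; ring.
  - rewrite Edist_x_J4 by lra; ring.
  - intros x z y; destruct x, z, y; unfold J4, PZY4, PXgZY4, tilted, lambda, sumS;
      rewrite ?PX_s0, ?PX_s1, ?PX_se; simpl; field; lra.
  - unfold dual_value, h, H3, logb; rewrite !xlogx_xlnx, (ln_div_mul (ds - d / 2)) by lra.
    rewrite (ln_div (dx - ds + d / 2)), (ln_div (2 * (1 - dx))), ln_mult, ln_div by lra.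
    rewrite (xlnx_pos d), (xlnx_pos (1 - d)), (xlnx_pos (1 - dx)),
      (xlnx_pos (dx - ds + d / 2)) by lra.
    field; lra.
Qed.

Definition J_const (d : R) : joint :=
  fun x z y => match z, y with b0, s0 => PX d x | _, _ => 0 end.

Lemma zero_rate_D5 b d ds dx : 1 < b -> 0 < d < / 3 -> D5 d ds dx ->
  exists W : kernel, minimizer b d ds dx W /\ MI b d W = 0.
Proof.
  intros Hb Hd [Hx Hs]; exists (cond_of d (J_const d)).
  assert (Hdist : Edist_s d (cond_of d (J_const d)) = / 2
                  /\ Edist_x d (cond_of d (J_const d)) = / 2 + d / 2).
  { rewrite Edist_s_cond_of, Edist_x_cond_of by lra; unfold J_const; simpl.
    rewrite ?PX_s0, ?PX_s1, ?PX_se; split; field. }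
  destruct Hdist as [Es Ex].
  destruct (attains_of_tilted b d ds dx (J_const d) 1 1 1 1 0) as (_ & Hmin & HMI); try lra.
  - intros x; destruct x; unfold J_const, sumB, sumS; simpl; ring.
  - intros x z y; destruct z, y; simpl; try lra; left; apply PX_pos; lra.
  - repeat split; lra.
  - rewrite ln_1; ring.
  - rewrite ln_1; ring.
  - intros x z y; destruct x, z, y; unfold J_const, tilted, lambda, sumS; simpl;
      rewrite ?PX_s0, ?PX_s1, ?PX_se; field.
  - unfold dual_value; rewrite ln_1; ring.
  - auto.
Qed.

Theorem theorem5 (b delta ds dx : R) :
  1 < b -> 0 < delta < / 3 -> delta / 2 <= ds -> 0 <= dx ->
  (D1 delta ds dx -> forall theta : R, 0 <= theta <= 1 ->
     attains b delta ds dx (J1 delta dx theta)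
       (h b delta + (1 - delta) * logb b 2 - h b dx - dx * logb b 2)) /\
  (D2 delta ds dx ->
     attains b delta ds dx (J2 delta dx)
       ((1 - delta) * (logb b 2 - h b ((dx - delta) / (1 - delta))))) /\
  (D3 delta ds dx ->
     attains b delta ds dx (J3 delta ds)
       ((1 - delta) * (logb b 2 - h b ((ds - delta / 2) / (1 - delta))))) /\
  (D4 delta ds dx ->
     attains b delta ds dx (J4 delta ds dx)
       (h b delta + (1 - delta) * logb b 2
        - H3 b (ds - delta / 2) (dx - ds + delta / 2) (1 - dx))) /\
  (D5 delta ds dx ->
     exists W : kernel, minimizer b delta ds dx W /\ MI b delta W = 0).
Proof.
  (* [delta / 2 <= ds] and [0 <= dx] already follow from each region. *)
  intros Hb Hd _ _; split; [| split; [| split; [| split]]]; intros HD.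
  - intros theta Htheta; apply attains_D1; auto.
  - apply attains_D2; auto.
  - apply attains_D3; auto.
  - apply attains_D4; auto.
  - apply zero_rate_D5; auto.
Qed.
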